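(* $\gamma^{L-ID}(\mathcal{H})=\frac38$: every local identifying code in the hexagonal grid has density at least $3/8$, and there is a local identifying code in the hexagonal grid of density $3/8$.
   Context: The hexagonal grid $\mathcal{H}$ has vertex set $\mathbb{Z}^2$, with $\mathbf{u}=(i,j)$ and $\mathbf{v}$ adjacent iff $\mathbf{u}-\mathbf{v}\in\{(\pm1,0),(0,(-1)^{i+j+1})\}$. For a nonempty $C\subseteq\mathbb{Z}^2$ and vertex $\mathbf{u}$, $I(\mathbf{u})=N[\mathbf{u}]\cap C$ where $N[\mathbf{u}]$ is the closed neighbourhood. $C$ is a local identifying code if $I(\mathbf{u})\ne\emptyset$ for all $\mathbf{u}$ and $I(\mathbf{u})\ne I(\mathbf{v})$ for all adjacent $\mathbf{u},\mathbf{v}$. The density of $C$ is $D(C)=\limsup_{n\to\infty}|C\cap Q_n|/|Q_n|$ with $Q_n=\{(i,j)\in\mathbb{Z}^2:|i|\le n,|j|\le n\}$. $\gamma^{L-ID}(G)$ denotes the smallest density of a local identifying code in $G$. *)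

From mathcomp Require Import all_boot all_order all_algebra.
From mathcomp Require Import all_classical all_reals all_analysis.
Set Implicit Arguments. Unset Strict Implicit. Unset Printing Implicit Defensive.
Import Order.TTheory GRing.Theory Num.Theory.
Local Open Scope classical_set_scope.
Local Open Scope ring_scope.

Definition vertex := (int * int)%type.

Definition hex_adj (u v : vertex) : Prop :=
  let d := (u.1 - v.1, u.2 - v.2) in
  d = (1, 0) \/ d = (-1, 0) \/ d = (0, (-1 : int) ^ (u.1 + u.2 + 1)).

Definition closed_nbhd (u : vertex) : set vertex := [set v | v = u \/ hex_adj u v].

Definition Iset (C : set vertex) (u : vertex) : set vertex := closed_nbhd u `&` C.

Definition local_identifying_code (C : set vertex) : Prop :=
  C !=set0 /\
  (forall u, Iset C u !=set0) /\
  (forall u v, hex_adj u v -> Iset C u <> Iset C v).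

Definition count_in_box (C : set vertex) (n : nat) : nat :=
  (\sum_(i < (2 * n).+1) \sum_(j < (2 * n).+1)
     (((i%:Z - n%:Z)%R, (j%:Z - n%:Z)%R) \in C : nat))%N.

Definition box_size (n : nat) : nat := ((2 * n).+1 ^ 2)%N.

Definition density (R : realType) (C : set vertex) : \bar R :=
  limn_esup (fun n => ((count_in_box C n)%:R / (box_size n)%:R : R)%:E).

(* Every vertex u of a local identifying code C is
   dominated, so u can send 12 units of charge to the code vertices of its
   closed neighbourhood N[u]: 4 to itself and 8 to its unique code neighbour
   when u is a code vertex with |I(u)| = 2, and 12/|I(u)| to each of them
   otherwise.  Since the neighbourhood of a code vertex c is separated on its
   three edges, a finite case analysis on the ten vertices at distance <= 2 of
   c shows that c receives at most 32.  Charge sent from the box Q_n stays in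
   Q_(n+1), whence 12 |Q_n| <= 32 |C /\ Q_(n+1)| and the density is >= 3/8.

   The set code0 = {(i,j) : (i + 4j) mod 8 < 3} is
   a local identifying code (its neighbourhood pattern only depends on the
   residue (i + 4j) mod 8), and each row of Q_n of length L contains at most
   (3L + 24)/8 of its vertices, so its density is <= 3/8. *)

From mathcomp Require Import all_boot all_order all_algebra zify lra.
From mathcomp Require Import all_classical all_reals all_analysis.
Import Order.TTheory GRing.Theory Num.Theory.
Local Open Scope classical_set_scope.
Local Open Scope ring_scope.

Definition vdir (u : vertex) : int := (-1 : int) ^ (u.1 + u.2 + 1).
Definition east (u : vertex) : vertex := (u.1 + 1, u.2).
Definition west (u : vertex) : vertex := (u.1 - 1, u.2).
Definition vert (u : vertex) : vertex := (u.1, u.2 - vdir u).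

Lemma expN1z_pm1 (z : int) : (-1 : int) ^ z = 1 \/ (-1 : int) ^ z = -1.
Proof.
case: z => n; rewrite /exprz -signr_odd; case: odd; rewrite ?invr1 ?invrN1; auto.
Qed.

Lemma vdir_pm1 (u : vertex) : vdir u = 1 \/ vdir u = -1.
Proof. exact: expN1z_pm1. Qed.

Lemma expN1zD_pm1 (z k : int) : k = 1 \/ k = -1 -> (-1 : int) ^ (z + k) = - (-1) ^ z.
Proof.
move=> hk; rewrite exprzDr ?unitrN1 //.
have expN1N1 : (-1 : int) ^ (-1 : int) = -1 by [].
by case: hk => ->; rewrite ?expr1z ?expN1N1 mulrN1.
Qed.

Lemma vdir_vert (u : vertex) : vdir (vert u) = - vdir u.
Proof.
rewrite /vdir /=.
have -> : u.1 + (u.2 - (-1) ^ (u.1 + u.2 + 1)) + 1 =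
   (u.1 + u.2 + 1) + (- (-1) ^ (u.1 + u.2 + 1)) by lia.
by rewrite expN1zD_pm1 //; case: (expN1z_pm1 (u.1 + u.2 + 1)) => ->; auto.
Qed.

Lemma vertK : involutive vert.
Proof. by move=> u; rewrite {1}/vert vdir_vert /vert /= opprK subrK; case: u. Qed.

Lemma eastK : cancel east west.
Proof. by move=> u; rewrite /west /east /= addrK; case: u. Qed.

Lemma westK : cancel west east.
Proof. by move=> u; rewrite /west /east /= subrK; case: u. Qed.

Lemma hex_adjE (u v : vertex) : hex_adj u v <-> v = east u \/ v = west u \/ v = vert u.
Proof.
case: u v => [a b] [c d]; rewrite /hex_adj /east /west /vert /vdir /=.
by split; case=> [[e1 e2] | [[e1 e2] | [e1 e2]]];
  [right; left | left | right; right | right; left | left | right; right]; congr pair; lia.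
Qed.

Lemma closed_nbhdE (u w : vertex) :
  closed_nbhd u w <-> w = u \/ w = east u \/ w = west u \/ w = vert u.
Proof. by rewrite /closed_nbhd /= hex_adjE. Qed.

Ltac destruct_ors := repeat (match goal with H : _ \/ _ |- _ => case: H => H end); subst.

Ltac pick_disjunct := first [ left; reflexivity | right; left; reflexivity
  | right; right; left; reflexivity | right; right; right; reflexivity ].

Lemma Iset_neq_l (C : set vertex) (u v w : vertex) :
  C w -> closed_nbhd u w -> ~ closed_nbhd v w -> Iset C u <> Iset C v.
Proof. by move=> Cw Nuw Nvw E; apply: Nvw; have : Iset C u w by []; rewrite E => -[]. Qed.

Lemma Iset_neq_r (C : set vertex) (u v w : vertex) :
  C w -> ~ closed_nbhd u w -> closed_nbhd v w -> Iset C u <> Iset C v.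
Proof. by move=> Cw Nuw Nvw E; apply: Nuw; have : Iset C v w by []; rewrite -E => -[]. Qed.

Lemma Iset_eq (C : set vertex) (u v : vertex) :
  (forall w, C w -> closed_nbhd u w -> closed_nbhd v w) ->
  (forall w, C w -> closed_nbhd v w -> closed_nbhd u w) ->
  Iset C u = Iset C v.
Proof.
move=> uv vu; apply/seteqP; split => w [Nw Cw]; split => //; by [apply: uv | apply: vu].
Qed.

(* Separation of each of the three edges at u, expressed by the four vertices
   of the symmetric difference of the two closed neighbourhoods. *)
Lemma separates_east (C : set vertex) (u : vertex) : Iset C u <> Iset C (east u) <->
  [|| west u \in C, vert u \in C, east (east u) \in C | vert (east u) \in C].
Proof.
split.
- move=> neq; apply: contrapT => nsep; apply: neq.
  apply: Iset_eq => w Cw /closed_nbhdE Nw; apply/closed_nbhdE; destruct_ors;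
    rewrite ?eastK; try by [auto | case: nsep; rewrite (mem_set Cw) ?orbT].
- have := vdir_pm1 u; have := vdir_pm1 (east u).
  case: u => a b; rewrite /east /west /vert /= => s1 s2 /or4P[] /set_mem Cw;
    [apply: Iset_neq_l Cw _ _ | apply: Iset_neq_l Cw _ _
    | apply: Iset_neq_r Cw _ _ | apply: Iset_neq_r Cw _ _];
    rewrite ?closed_nbhdE /east /west /vert /=; try by pick_disjunct.
  all: case=> [[]|[[]|[[]|[]]]]; lia.
Qed.

Lemma separates_west (C : set vertex) (u : vertex) : Iset C u <> Iset C (west u) <->
  [|| east u \in C, vert u \in C, west (west u) \in C | vert (west u) \in C].
Proof.
split.
- move=> neq; apply: contrapT => nsep; apply: neq.
  apply: Iset_eq => w Cw /closed_nbhdE Nw; apply/closed_nbhdE; destruct_ors;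
    rewrite ?westK; try by [auto | case: nsep; rewrite (mem_set Cw) ?orbT].
- have := vdir_pm1 u; have := vdir_pm1 (west u).
  case: u => a b; rewrite /east /west /vert /= => s1 s2 /or4P[] /set_mem Cw;
    [apply: Iset_neq_l Cw _ _ | apply: Iset_neq_l Cw _ _
    | apply: Iset_neq_r Cw _ _ | apply: Iset_neq_r Cw _ _];
    rewrite ?closed_nbhdE /east /west /vert /=; try by pick_disjunct.
  all: case=> [[]|[[]|[[]|[]]]]; lia.
Qed.

Lemma separates_vert (C : set vertex) (u : vertex) : Iset C u <> Iset C (vert u) <->
  [|| east u \in C, west u \in C, east (vert u) \in C | west (vert u) \in C].
Proof.
split.
- move=> neq; apply: contrapT => nsep; apply: neq.
  apply: Iset_eq => w Cw /closed_nbhdE Nw; apply/closed_nbhdE; destruct_ors;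
    rewrite ?vertK; try by [auto | case: nsep; rewrite (mem_set Cw) ?orbT].
- have := vdir_pm1 u; have := vdir_vert u.
  case: u => a b; rewrite /east /west /vert /= => s1 s2 /or4P[] /set_mem Cw;
    [apply: Iset_neq_l Cw _ _ | apply: Iset_neq_l Cw _ _
    | apply: Iset_neq_r Cw _ _ | apply: Iset_neq_r Cw _ _];
    rewrite ?closed_nbhdE /east /west /vert /=; try by pick_disjunct.
  all: case=> [[]|[[]|[[]|[]]]]; lia.
Qed.

Lemma dominatedP (C : set vertex) (u : vertex) :
  Iset C u !=set0 <-> [|| u \in C, east u \in C, west u \in C | vert u \in C].
Proof.
split.
- by case=> w [/closed_nbhdE Nw Cw]; destruct_ors; rewrite (mem_set Cw) ?orbT.
- case/or4P => /set_mem Cw; [exists u | exists (east u) | exists (west u) | exists (vert u)];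
    split => //; apply/closed_nbhdE; pick_disjunct.
Qed.

Definition Icard (C : set vertex) (u : vertex) : nat :=
  ((u \in C) + (east u \in C) + (west u \in C) + (vert u \in C))%N.

Definition self_share (inC : bool) (k : nat) : nat :=
  (if inC && (k == 2) then 4 else 12 %/ k)%N.

Definition nbr_share (inC : bool) (k : nat) : nat :=
  (if inC && (k == 2) then 8 else 12 %/ k)%N.

Definition sent (C : set vertex) (u : vertex) : nat :=
  ((u \in C) * self_share (u \in C) (Icard C u)
  + (east u \in C) * nbr_share (u \in C) (Icard C u)
  + (west u \in C) * nbr_share (u \in C) (Icard C u)
  + (vert u \in C) * nbr_share (u \in C) (Icard C u))%N.

Lemma sent_dominated (C : set vertex) (u : vertex) : (0 < Icard C u)%N -> sent C u = 12%N.
Proof.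
rewrite /sent /Icard.
by case: (u \in C); case: (east u \in C); case: (west u \in C); case: (vert u \in C).
Qed.

Definition recv_self (C : set vertex) (c : vertex) : nat :=
  ((c \in C) * self_share (c \in C) (Icard C c))%N.
Definition recv_from_west (C : set vertex) (c : vertex) : nat :=
  ((c \in C) * nbr_share (west c \in C) (Icard C (west c)))%N.
Definition recv_from_east (C : set vertex) (c : vertex) : nat :=
  ((c \in C) * nbr_share (east c \in C) (Icard C (east c)))%N.
Definition recv_from_vert (C : set vertex) (c : vertex) : nat :=
  ((c \in C) * nbr_share (vert c \in C) (Icard C (vert c)))%N.

Definition received (C : set vertex) (c : vertex) : nat :=
  (recv_self C c + recv_from_west C c + recv_from_east C c + recv_from_vert C c)%N.

Lemma sentE (C : set vertex) (u : vertex) : sent C u =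
  (recv_self C u + recv_from_west C (east u) + recv_from_east C (west u)
   + recv_from_vert C (vert u))%N.
Proof. by rewrite /sent /recv_self /recv_from_west /recv_from_east /recv_from_vert eastK westK vertK. Qed.

(* The key local estimate: in a local identifying code no vertex receives more
   than 32.  The received charge depends only on the ten vertices at distance
   at most 2 from c, and the three separation conditions at c rule out every
   configuration exceeding 32. *)
Lemma received_le (C : set vertex) (c : vertex) : local_identifying_code C ->
  (received C c <= 32 * (c \in C))%N.
Proof.
case=> _ [_ separated].
have adj_e : hex_adj c (east c) by apply/hex_adjE; left.
have adj_w : hex_adj c (west c) by apply/hex_adjE; right; left.
have adj_v : hex_adj c (vert c) by apply/hex_adjE; right; right.
move: (separated _ _ adj_e) (separated _ _ adj_w) (separated _ _ adj_v).
move=> /separates_east + /separates_west + /separates_vert.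
rewrite /received /recv_self /recv_from_west /recv_from_east /recv_from_vert /Icard.
rewrite eastK westK vertK.
case: (east (east c) \in C); case: (vert (east c) \in C);
case: (west (west c) \in C); case: (vert (west c) \in C);
case: (east (vert c) \in C); case: (west (vert c) \in C);
case: (c \in C); case: (east c \in C); case: (west c \in C); case: (vert c \in C) => //.
Qed.

Definition box_seq (n : nat) : seq vertex :=
  [seq (i%:Z - n%:Z, j%:Z - n%:Z) | i <- index_iota 0 (2 * n).+1, j <- index_iota 0 (2 * n).+1].

Definition in_box (n : nat) (x : vertex) : bool :=
  (- n%:Z <= x.1 <= n%:Z) && (- n%:Z <= x.2 <= n%:Z).

Lemma count_in_boxE (C : set vertex) (n : nat) :
  count_in_box C n = (\sum_(x <- box_seq n) (x \in C))%N.
Proof.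
rewrite /count_in_box /box_seq big_allpairs_dep /= big_mkord.
by apply: eq_bigr => i _; rewrite big_mkord.
Qed.

Lemma mem_box_seq (n : nat) (x : vertex) : (x \in box_seq n) = in_box n x.
Proof.
apply/allpairsP/idP.
- case=> -[i j] /= []; rewrite !mem_index_iota => hi hj ->; rewrite /in_box /=.
  by apply/andP; split; apply/andP; split; lia.
- case: x => a b; rewrite /in_box /= => /andP[/andP[h1 h2] /andP[h3 h4]].
  exists (absz (a + n%:Z), absz (b + n%:Z)); rewrite /= !mem_index_iota.
  by split; [lia | lia | congr pair; lia].
Qed.

Lemma box_seq_uniq (n : nat) : uniq (box_seq n).
Proof.
apply: allpairs_uniq; rewrite ?iota_uniq //.
by move=> [i j] [i' j'] _ _ /= [e1 e2]; congr pair; lia.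
Qed.

Lemma size_box_seq (n : nat) : size (box_seq n) = box_size n.
Proof. by rewrite size_allpairs size_iota subn0 /box_size expnS expn1. Qed.

Lemma in_box_near (n : nat) (x y : vertex) : in_box n x ->
  `|y.1 - x.1| <= 1 -> `|y.2 - x.2| <= 1 -> in_box n.+1 y.
Proof.
rewrite /in_box => /andP[/andP[h1 h2] /andP[h3 h4]] d1 d2.
by apply/andP; split; apply/andP; split; lia.
Qed.

Lemma sum_box_inj (F : vertex -> nat) {g : vertex -> vertex} (n : nat) :
  injective g -> (forall x, in_box n x -> in_box n.+1 (g x)) ->
  (\sum_(x <- box_seq n) F (g x) <= \sum_(x <- box_seq n.+1) F x)%N.
Proof.
move=> g_inj g_box; rewrite -(big_map g xpredT F).
apply: (@uniq_sub_le_big _ addn leq leqnn (fun x y => leq_addr y x));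
  rewrite ?map_inj_uniq ?box_seq_uniq //.
by move=> _ /mapP[x xQ ->]; rewrite mem_box_seq; apply: g_box; rewrite -mem_box_seq.
Qed.

Lemma sum_sent (C : set vertex) (n : nat) : (forall u, Iset C u !=set0) ->
  (\sum_(x <- box_seq n) sent C x = 12 * box_size n)%N.
Proof.
move=> dominated; rewrite -size_box_seq (eq_bigr (fun=> 12%N)).
  by rewrite big_const_seq count_predT iter_addn_0 mulnC.
move=> x _; apply: sent_dominated; have := proj1 (dominatedP C x) (dominated x).
by rewrite /Icard; case/or4P => ->; rewrite ?addnS.
Qed.

(* The charge sent from Q_n is received inside Q_(n+1): each of the four
   kinds of transfer is a reindexing along an injective move of length 1. *)
Lemma sum_sent_le (C : set vertex) (n : nat) :
  (\sum_(x <- box_seq n) sent C x <= \sum_(x <- box_seq n.+1) received C x)%N.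
Proof.
have near_id x : in_box n x -> in_box n.+1 (id x) by move/in_box_near; apply => /=; lia.
have near_e x : in_box n x -> in_box n.+1 (east x) by move/in_box_near; apply => /=; lia.
have near_w x : in_box n x -> in_box n.+1 (west x) by move/in_box_near; apply => /=; lia.
have near_v x : in_box n x -> in_box n.+1 (vert x).
  have := vdir_pm1 x; rewrite /vert; set s := vdir x => s_pm1.
  by move/in_box_near; apply => /=; lia.
under eq_bigr do rewrite sentE.
rewrite /received !big_split; apply: leq_add; [apply: leq_add; [apply: leq_add|]|].
- exact: (sum_box_inj (recv_self C) n (@inj_id _) near_id).
- exact: (sum_box_inj (recv_from_west C) n (can_inj eastK) near_e).
- exact: (sum_box_inj (recv_from_east C) n (can_inj westK) near_w).
- exact: (sum_box_inj (recv_from_vert C) n (inv_inj vertK) near_v).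
Qed.

(* Counting form of the discharging argument: the 12 |Q_n| units sent from
   Q_n are received inside Q_(n+1), at most 32 per code vertex. *)
Lemma count_lower_bound (C : set vertex) (n : nat) : local_identifying_code C ->
  (12 * box_size n <= 32 * count_in_box C n.+1)%N.
Proof.
move=> lic; have [_ [dominated _]] := lic.
rewrite -(sum_sent C n dominated) count_in_boxE big_distrr /=.
apply: (leq_trans (sum_sent_le C n)); apply: leq_sum => x _; exact: received_le.
Qed.

(* The periodic code code0: (i,j) is a code vertex iff (i + 4j) mod 8 < 3.
   Each neighbour shifts the residue (i + 4j) mod 8 by a constant, so the
   code conditions at u only depend on this residue. *)
Definition residue8 (u : vertex) : int := ((u.1 + 4 * u.2) %% 8)%Z.

Definition code0 : set vertex := [set u | residue8 u < 3].

Lemma mem_code0 (u : vertex) : (u \in code0) = (residue8 u < 3).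
Proof. by apply/idP/idP => [/set_mem | h]; [|apply/mem_set]. Qed.

Lemma mod8_cases (z : int) : exists2 k : nat, (k < 8)%N & (z %% 8)%Z = k%:Z.
Proof.
exists (absz (z %% 8)%Z); last by rewrite gez0_abs // modz_ge0.
have := ltz_pmod z (isT : 0 < 8 :> int); have := modz_ge0 z (isT : 8 != 0 :> int); lia.
Qed.

Lemma residue8_east (u : vertex) : residue8 (east u) = ((residue8 u + 1) %% 8)%Z.
Proof. by rewrite /residue8 modzDml /east /=; congr (_ %% _)%Z; lia. Qed.

Lemma residue8_west (u : vertex) : residue8 (west u) = ((residue8 u + 7) %% 8)%Z.
Proof.
rewrite /residue8 modzDml /west /=.
by rewrite (_ : u.1 + 4 * u.2 + 7 = 1 * 8 + (u.1 - 1 + 4 * u.2)) ?modzMDl //; lia.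
Qed.

Lemma residue8_vert (u : vertex) : residue8 (vert u) = ((residue8 u + 4) %% 8)%Z.
Proof.
rewrite /residue8 modzDml /vert /=; case: (vdir_pm1 u) => ->.
  by rewrite (_ : u.1 + 4 * u.2 + 4 = 1 * 8 + (u.1 + 4 * (u.2 - 1))) ?modzMDl //; lia.
by rewrite (_ : u.1 + 4 * u.2 + 4 = 0 * 8 + (u.1 + 4 * (u.2 - -1))) ?modzMDl //; lia.
Qed.

Definition residue8E := (residue8_east, residue8_west, residue8_vert).

Lemma residue8_range (u : vertex) : exists2 k : nat, (k < 8)%N & residue8 u = k%:Z.
Proof. exact: mod8_cases. Qed.

(* Domination and the separation of the three edges at u are checked on the
   eight possible residues of u. *)
Lemma code0_lic : local_identifying_code code0.
Proof.
split; first by exists (0, 0); rewrite /code0 /residue8.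
split=> [u | u v /hex_adjE [-> | [-> | ->]]];
  [apply/dominatedP | apply/separates_east | apply/separates_west | apply/separates_vert];
  rewrite !mem_code0 !residue8E; case: (residue8_range u) => k hk ->;
  by do 8?[case: k hk => [|k] hk //].
Qed.

(* Counting code0 row by row: along a row, membership in code0 is the 8-periodic
   indicator [low_residue] of the abscissa shifted by a constant. *)
Definition low_residue (z : int) : nat := ((z %% 8)%Z < 3)%R.

Lemma low_residue_period (b : int) : (\sum_(0 <= i < 8) low_residue (i%:Z + b) = 3)%N.
Proof.
have -> : (\sum_(0 <= i < 8) low_residue (i%:Z + b) =
           \sum_(0 <= i < 8) low_residue (i%:Z + (b %% 8)%Z))%N.
  by apply: eq_bigr => i _; rewrite /low_residue modzDmr.
by case: (mod8_cases b) => k hk ->; do 8?[case: k hk => [|k] hk //]; rewrite unlock.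
Qed.

Lemma low_residue_periods (q : nat) (b : int) :
  (\sum_(0 <= i < 8 * q) low_residue (i%:Z + b) = 3 * q)%N.
Proof.
elim: q => [|q IHq]; first by rewrite muln0 big_geq.
rewrite (big_cat_nat (n := 8 * q)) ?leq_mul2l ?leqnSn ?orbT // IHq.
rewrite (big_addn 0 _ (8 * q)) (_ : 8 * q.+1 - 8 * q = 8)%N ?mulnS ?addnK //.
rewrite (eq_bigr (fun i => low_residue (i%:Z + (b + (8 * q)%:Z)))); last first.
  by move=> i _; congr low_residue; lia.
by rewrite low_residue_period addnC.
Qed.

Lemma low_residue_row (a : int) (L : nat) :
  (8 * \sum_(i < L) low_residue (i%:Z + a) <= 3 * L + 24)%N.
Proof.
rewrite -(big_mkord xpredT (fun i : nat => low_residue (i%:Z + a))).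
set q := (L %/ 8)%N.
have hL : (L <= 8 * q.+1)%N by rewrite /q; have := ltn_ceil L (isT : 0 < 8)%N; lia.
apply: (@leq_trans (8 * \sum_(0 <= i < 8 * q.+1) low_residue (i%:Z + a))).
  by rewrite leq_mul2l /= [X in (_ <= X)%N](big_cat_nat (n := L)) // leq_addr.
by rewrite low_residue_periods; have := leq_divM L 8; rewrite -/q; lia.
Qed.

Lemma count_code0_le (n : nat) :
  (8 * count_in_box code0 n <= (2 * n).+1 * (3 * (2 * n).+1 + 24))%N.
Proof.
rewrite /count_in_box exchange_big big_distrr.
apply: (@leq_trans (\sum_(j < (2 * n).+1) (3 * (2 * n).+1 + 24))%N); last first.
  by rewrite sum_nat_const card_ord.
apply: leq_sum => j _.
rewrite (eq_bigr (fun i : 'I_(2 * n).+1 => low_residue (i%:Z + (4 * (j%:Z - n%:Z) - n%:Z)))).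
  exact: low_residue_row.
move=> i _; rewrite mem_code0 /residue8 /low_residue /=.
by congr (nat_of_bool (_ < 3)); congr (_ %% _)%Z; lia.
Qed.

Section DensityBounds.
Variable R : realType.

Lemma limn_esup_le (u v : (\bar R)^nat) : (forall n, (u n <= v n)%E) ->
  (limn_esup u <= limn_esup v)%E.
Proof.
move=> uv; rewrite !limn_esup_lim; apply: lee_lim; [exact: is_cvg_esups | exact: is_cvg_esups |].
apply: nearW => n; apply: ge_ereal_sup => _ [k /= nk <-].
by apply: (le_trans (uv k)); apply: ereal_sup_ubound; exists k.
Qed.

Lemma limn_esup_harmonic (a b : R) : limn_esup (fun n => (a + b * harmonic n)%:E) = a%:E.
Proof.
apply: (cvg_limn_einf_sup _).2; apply: cvg_EFin; first exact: nearW.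
rewrite -[X in _ --> X]addr0 -[X in _ --> _ + X](mulr0 b).
by apply: cvgD; [exact: cvg_cst | exact: cvgMl_tmp (@cvg_harmonic R)].
Qed.

(* The two elementary inequalities turning the box counts into ratios
   3/8 -/+ O(1/n). *)
Lemma ratio_lower (x c : R) : 0 <= x -> 12 * (2 * x + 1) ^+ 2 <= 32 * c ->
  3 / 8 + (-2) * (x + 2)^-1 <= c / (2 * x + 3) ^+ 2.
Proof.
move=> x_ge0 hc.
have den_gt0 : 0 < (2 * x + 3) ^+ 2 by apply: exprn_gt0; lra.
rewrite ler_pdivlMr //.
set h := (x + 2)^-1.
have h_inv : h * (x + 2) = 1 by rewrite mulVf //; lra.
have h_gt0 : 0 < h by rewrite invr_gt0; lra.
have poly_ineq : 3 * (x + 1) * (x + 2) <= 2 * (2 * x + 3) ^+ 2 by nra.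
have : 3 * (x + 1) <= 2 * (2 * x + 3) ^+ 2 * h.
  have e : 3 * (x + 1) = 3 * (x + 1) * (x + 2) * h.
    by rewrite -mulrA (mulrC (x + 2)) h_inv mulr1.
  by rewrite {1}e; apply: ler_wpM2r => //; apply: ltW.
nra.
Qed.

Lemma ratio_upper (L x c : R) : 0 <= x -> x + 1 <= L -> 8 * c <= L * (3 * L + 24) ->
  c / L ^+ 2 <= 3 / 8 + 3 * (x + 1)^-1.
Proof.
move=> x_ge0 xL hc.
have L_gt0 : 0 < L by lra.
rewrite ler_pdivrMr ?exprn_gt0 //.
have h_gt0 : 0 < (x + 1)^-1 by rewrite invr_gt0; lra.
have h_inv : (x + 1) * (x + 1)^-1 = 1 by rewrite mulfV //; lra.
have : 1 <= L * (x + 1)^-1.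
  by rewrite -[X in X <= _]h_inv; apply: ler_wpM2r => //; apply: ltW.
nra.
Qed.

Lemma density_lower_bound (C : set vertex) :
  (forall n, 12 * box_size n <= 32 * count_in_box C n.+1)%N ->
  ((3 / 8 : R)%:E <= density R C)%E.
Proof.
move=> hcount; rewrite /density -(limn_esup_harmonic (3 / 8) (-2)).
apply: limn_esup_le => -[|k]; rewrite lee_fin /harmonic /=.
  have : 0 <= (count_in_box C 0)%:R / (box_size 0)%:R :> R by apply: divr_ge0.
  by rewrite invr1; lra.
have odd_nat : ((2 * k).+1%:R : R) = 2 * k%:R + 1 by rewrite -addn1 natrD natrM.
have odd_nat' : ((2 * k.+1).+1%:R : R) = 2 * k%:R + 3.
  have -> : ((2 * k.+1).+1 = 2 * k + 3)%N by lia.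
  by rewrite natrD natrM.
have := hcount k; rewrite -(ler_nat R) /box_size !natrM odd_nat odd_nat' -!expr2.
by rewrite -[k.+2]addn2 natrD; apply: ratio_lower.
Qed.

Lemma density_upper_bound (C : set vertex) :
  (forall n, 8 * count_in_box C n <= (2 * n).+1 * (3 * (2 * n).+1 + 24))%N ->
  (density R C <= (3 / 8 : R)%:E)%E.
Proof.
move=> hcount; rewrite /density -(limn_esup_harmonic (3 / 8) 3).
apply: limn_esup_le => n; rewrite lee_fin /harmonic /=.
have := hcount n; rewrite -(ler_nat R) !natrM !natrD natrM => hc.
rewrite -expr2 -[n.+1]addn1 natrD.
apply: (ratio_upper ((2 * n).+1)%:R) => //.
by rewrite natr1 ler_nat; lia.
Qed.

End DensityBounds.

Theorem mainTheorem14 (R : realType) :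
  (forall C : set vertex, local_identifying_code C ->
     ((3 / 8 : R)%:E <= density R C)%E) /\
  (exists C : set vertex, local_identifying_code C /\
     density R C = (3 / 8 : R)%:E).
Proof.
have lower C : local_identifying_code C -> ((3 / 8 : R)%:E <= density R C)%E.
  by move=> lic; apply: density_lower_bound => n; apply: count_lower_bound.
split=> //; exists code0; split; first exact: code0_lic.
apply: le_anti; rewrite lower ?andbT; last exact: code0_lic.
exact/density_upper_bound/count_code0_le.
Qed.
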